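(* Let $\bar V$ be a finite node set. Let $S_q,S'_q\in\mathbb R^{\bar V}$, $T_0>0$, $\epsilon_p>0$, $0<\eta\le1$, and let $p=\operatorname{softmax}(S_q/T_0)$, $p'=\operatorname{softmax}(S'_q/T_0)$, $a_v=(p_v+\epsilon_p)^\eta$, $a'_v=(p'_v+\epsilon_p)^\eta$. Let $u_q\in\mathbb R^d$, let $W_x$ be a $d\times d_x$ matrix, and let $x_v,x'_v\in\mathbb R^{d_x}$ for $v\in\bar V$. Define $h_v^{(0)}=a_vu_q+W_xx_v$ and $h_v'^{(0)}=a'_vu_q+W_xx'_v$. Then $$\max_{v\in\bar V}\|h^{(0)}_v-h'^{(0)}_v\|_2\le C_{\mathrm{init}}(\Delta_{\mathrm{seed}}+\Delta_X),\qquad C_{\mathrm{init}}=\frac{\eta\epsilon_p^{\eta-1}}{T_0}\|u_q\|_2+\|W_x\|_2,$$ where $\Delta_{\mathrm{seed}}=\|S_q-S'_q\|_\infty$ and $\Delta_X=\max_{v}\|x_v-x'_v\|_2$.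
   Context: $\|W_x\|_2$ is the spectral norm. In the paper the two primed/unprimed quantities come from two consecutive memory graphs aligned on a common node universe $\bar V$ (nodes absent from one graph are padded as isolated nodes), $S_q$ are query-conditioned entry scores, and $h^{(0)}$ are initial node representations of a graph reader. *)

From HB Require Import structures.
From mathcomp Require Import all_boot all_order all_algebra.
From mathcomp Require Import all_classical all_reals all_analysis.
Set Implicit Arguments. Unset Strict Implicit. Unset Printing Implicit Defensive.
Import Order.TTheory GRing.Theory Num.Theory.
Local Open Scope ring_scope.
Local Open Scope classical_set_scope.

Definition l2norm (R : realType) (n : nat) (v : 'cV[R]_n) : R :=
  Num.sqrt (\sum_(i < n) v i 0 ^+ 2).

Definition specnorm (R : realType) (m n : nat) (W : 'M[R]_(m, n)) : R :=
  sup [set l2norm (W *m x) | x in [set x : 'cV[R]_n | l2norm x <= 1]].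

(* maximum over a finite index set (0 on an empty set; all uses are of
   nonnegative quantities) *)
Definition fmax (R : realType) (V : finType) (f : V -> R) : R :=
  \big[Num.max/0]_(v : V) f v.

Definition softmax (R : realType) (V : finType) (s : V -> R) : V -> R :=
  fun v => expR (s v) / \sum_(w : V) expR (s w).

From HB Require Import structures.
From mathcomp Require Import all_boot all_order all_algebra.
From mathcomp Require Import all_classical all_reals all_analysis.
From mathcomp Require Import ring lra.
Import Order.TTheory GRing.Theory Num.Theory.
Set Implicit Arguments. Unset Strict Implicit.
Local Open Scope ring_scope.

(* Node by node, h0 v - h0' v = (a v - a' v) *: uq + Wx *m (x v - x' v), so the
   triangle inequality and the operator-norm bound reduce the claim to
   |a v - a' v| <= eta epsp^(eta - 1) / T0 * Dseed.  This composes two Lipschitz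
   estimates: softmax is 1-Lipschitz from the sup norm to each coordinate
   (moving every score by at most D multiplies each odds ratio by at most
   e^(2D), which moves a probability by at most tanh (D / 2) <= D), and
   t |-> t^eta is (eta epsp^(eta - 1))-Lipschitz on [epsp, +oo) by concavity. *)

Lemma CauchySchwarz_sum (R : realDomainType) (I : finType) (a b : I -> R) :
  (\sum_i a i * b i) ^+ 2 <= (\sum_i a i ^+ 2) * (\sum_i b i ^+ 2).
Proof.
have sum_mul_sum (f g : I -> R) :
    (\sum_i f i) * (\sum_j g j) = \sum_i \sum_j f i * g j.
  by rewrite mulr_suml; apply: eq_bigr => i _; rewrite mulr_sumr.
have lagrange : ((\sum_i a i ^+ 2) * (\sum_i b i ^+ 2) - (\sum_i a i * b i) ^+ 2) *+ 2
    = \sum_i \sum_j (a i * b j - a j * b i) ^+ 2.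
  have swapped : (\sum_i a i ^+ 2) * (\sum_i b i ^+ 2)
      = \sum_i \sum_j a j ^+ 2 * b i ^+ 2.
    by rewrite sum_mul_sum exchange_big.
  rewrite mulr2n {1}sum_mul_sum swapped expr2 sum_mul_sum.
  rewrite addrACA -opprD -!big_split -sumrB /=; apply: eq_bigr => i _.
  rewrite -!big_split -sumrB /=; apply: eq_bigr => j _; ring.
rewrite -subr_ge0 -(pmulrn_lge0 _ (ltn0Sn 1)) lagrange.
by apply: sumr_ge0 => i _; apply: sumr_ge0 => j _; apply: sqr_ge0.
Qed.

Lemma CauchySchwarz_sum_sqrt (R : rcfType) (I : finType) (a b : I -> R) :
  \sum_i a i * b i <= Num.sqrt (\sum_i a i ^+ 2) * Num.sqrt (\sum_i b i ^+ 2).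
Proof.
have sqr_sum_ge0 (f : I -> R) : 0 <= \sum_i f i ^+ 2.
  by apply: sumr_ge0 => i _; apply: sqr_ge0.
rewrite -sqrtrM // (le_trans (ler_norm _)) // -sqrtr_sqr.
exact/ler_wsqrtr/CauchySchwarz_sum.
Qed.

Section EuclideanNorm.
Variable R : realType.

Lemma l2norm_ge0 n (v : 'cV[R]_n) : 0 <= l2norm v.
Proof. exact: sqrtr_ge0. Qed.

Lemma l2norm0 n : l2norm (0 : 'cV[R]_n) = 0.
Proof. by rewrite /l2norm big1 ?sqrtr0 // => i _; rewrite mxE expr0n. Qed.

Lemma l2normZ n (c : R) (v : 'cV[R]_n) : l2norm (c *: v) = `|c| * l2norm v.
Proof.
rewrite /l2norm (eq_bigr (fun i => c ^+ 2 * v i 0 ^+ 2)); last first.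
  by move=> i _; rewrite mxE exprMn.
by rewrite -mulr_sumr sqrtrM ?sqr_ge0 // sqrtr_sqr.
Qed.

Lemma l2normD n (u v : 'cV[R]_n) : l2norm (u + v) <= l2norm u + l2norm v.
Proof.
have sqr_l2norm (w : 'cV[R]_n) : l2norm w ^+ 2 = \sum_i w i 0 ^+ 2.
  by rewrite sqr_sqrtr //; apply: sumr_ge0 => i _; apply: sqr_ge0.
rewrite -(ger0_norm (addr_ge0 (l2norm_ge0 u) (l2norm_ge0 v))) -sqrtr_sqr.
apply: ler_wsqrtr; rewrite sqrrD !sqr_l2norm.
rewrite (eq_bigr (fun i => u i 0 ^+ 2 + (u i 0 * v i 0) *+ 2 + v i 0 ^+ 2)); last first.
  by move=> i _; rewrite mxE sqrrD.
rewrite !big_split /=.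
have cs : \sum_i u i 0 * v i 0 <= l2norm u * l2norm v.
  exact: (CauchySchwarz_sum_sqrt (fun i => u i 0) (fun i => v i 0)).
by rewrite mulr2n lerD2r lerD2l lerD.
Qed.

Lemma l2norm_mulmx_le_frobenius m n (W : 'M[R]_(m, n)) (y : 'cV[R]_n) :
  l2norm (W *m y) <= Num.sqrt (\sum_i \sum_j W i j ^+ 2) * l2norm y.
Proof.
rewrite -sqrtrM; last by do 2!(apply: sumr_ge0 => ? _); apply: sqr_ge0.
apply: ler_wsqrtr; rewrite mulr_suml; apply: ler_sum => i _.
by rewrite mxE; apply: (CauchySchwarz_sum (fun j => W i j) (fun j => y j 0)).
Qed.

Lemma specnorm_set_ubound m n (W : 'M[R]_(m, n)) :
  has_ubound [set l2norm (W *m y) | y in [set y : 'cV[R]_n | l2norm y <= 1]].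
Proof.
exists (Num.sqrt (\sum_i \sum_j W i j ^+ 2)) => _ [y /= y_le1 <-].
apply: le_trans (l2norm_mulmx_le_frobenius W y) _.
by rewrite ler_piMr ?sqrtr_ge0.
Qed.

Lemma specnorm_ge0 m n (W : 'M[R]_(m, n)) : 0 <= specnorm W.
Proof.
apply: (ub_le_sup (specnorm_set_ubound W)).
by exists 0; rewrite /= ?mulmx0 l2norm0.
Qed.

Lemma l2norm_mulmx_le m n (W : 'M[R]_(m, n)) (y : 'cV[R]_n) :
  l2norm (W *m y) <= specnorm W * l2norm y.
Proof.
have [y0|y_neq0] := eqVneq (l2norm y) 0.
  by have := l2norm_mulmx_le_frobenius W y; rewrite y0 !mulr0.
have y_gt0 : 0 < l2norm y by rewrite lt_def y_neq0 l2norm_ge0.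
set z := (l2norm y)^-1 *: y.
have z_le1 : l2norm z <= 1.
  by rewrite l2normZ ger0_norm ?invr_ge0 ?l2norm_ge0 // mulVf.
have : l2norm (W *m z) <= specnorm W.
  by apply: (ub_le_sup (specnorm_set_ubound W)); exists z.
rewrite -scalemxAr l2normZ ger0_norm ?invr_ge0 ?l2norm_ge0 //.
by rewrite ler_pdivrMl // mulrC.
Qed.

End EuclideanNorm.

Section FiniteMax.
Variables (R : realType) (V : finType).
Implicit Type f : V -> R.

Lemma fmax_ge0 f : 0 <= fmax f.
Proof.
by rewrite /fmax; elim/big_rec: _ => // v y _ y_ge0; rewrite le_max y_ge0 orbT.
Qed.

Lemma le_fmax f v : f v <= fmax f.
Proof. by rewrite /fmax (bigD1 v) //= le_max lexx. Qed.

Lemma fmax_le f c : 0 <= c -> (forall v, f v <= c) -> fmax f <= c.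
Proof.
move=> c_ge0 f_le; apply: (big_ind (fun y => y <= c)) => // y z y_le z_le.
by rewrite ge_max y_le z_le.
Qed.

End FiniteMax.

Section PowerLipschitz.
Variable R : realType.
Implicit Types (t x y eps eta : R).

(* Weighted AM-GM: Young's inequality for t ^ eta and 1 with the conjugate
   exponents 1 / eta and 1 / (1 - eta). *)
Lemma powR_le_affine t eta : 0 <= t -> 0 < eta <= 1 ->
  t `^ eta <= eta * t + (1 - eta).
Proof.
move=> t_ge0 /andP[eta_gt0 eta_le1].
have [->|eta_neq1] := eqVneq eta 1; first by rewrite powRr1 // mul1r subrr addr0.
have eta_lt1 : eta < 1 by rewrite lt_def eq_sym eta_neq1.
have young := @conjugate_powR R (t `^ eta) 1 eta^-1 (1 - eta)^-1 (powR_ge0 _ _) ler01.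
rewrite invr_gt0 eta_gt0 invr_gt0 subr_gt0 eta_lt1 !invrK addrC subrK in young.
have {young} := young isT isT erefl.
by rewrite mulr1 powR1 -powRrM mulfV ?gt_eqF // powRr1 // mul1r mulrC.
Qed.

Lemma powR_le_tangent x y eta : 0 < x -> 0 <= y -> 0 < eta <= 1 ->
  y `^ eta <= x `^ eta + eta * x `^ (eta - 1) * (y - x).
Proof.
move=> x_gt0 y_ge0 eta01; have /andP[eta_gt0 _] := eta01.
set t := y / x; have t_ge0 : 0 <= t by rewrite divr_ge0 // ltW.
have -> : y = x * t by rewrite /t mulrC divfK ?gt_eqF.
rewrite (powRM _ (ltW x_gt0) t_ge0) -(mulr_powRB1 (ltW x_gt0) eta_gt0).
have P_ge0 : 0 <= x * x `^ (eta - 1) by rewrite mulr_ge0 ?powR_ge0 // ltW.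
have := ler_wpM2l P_ge0 (powR_le_affine t_ge0 eta01).
lra.
Qed.

Lemma powR_lipschitz eps x y eta : 0 < eps -> eps <= x -> eps <= y -> 0 < eta <= 1 ->
  `|x `^ eta - y `^ eta| <= eta * eps `^ (eta - 1) * `|x - y|.
Proof.
move=> eps_gt0; wlog x_le_y : x y / x <= y => [wlog_le x_ge y_ge eta01|].
  have [x_le_y|/ltW y_le_x] := leP x y; first exact: wlog_le.
  by rewrite distrC (distrC x); apply: wlog_le.
move=> x_ge y_ge eta01; have /andP[eta_gt0 eta_le1] := eta01.
have x_gt0 : 0 < x := lt_le_trans eps_gt0 x_ge.
have y_ge0 : 0 <= y := ltW (lt_le_trans x_gt0 x_le_y).
have powR_le : x `^ eta <= y `^ eta.
  by apply: ge0_ler_powR; rewrite ?nnegrE ?(ltW eta_gt0) ?(ltW x_gt0).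
rewrite distrC (distrC x) !ger0_norm ?subr_ge0 //.
have antitone : x `^ (eta - 1) <= eps `^ (eta - 1).
  rewrite -opprB !powRN lef_pV2 ?posrE ?powR_gt0 //.
  by apply: ge0_ler_powR; rewrite ?nnegrE ?subr_ge0 ?(ltW eps_gt0) ?(ltW x_gt0).
have := powR_le_tangent x_gt0 y_ge0 eta01.
have d_ge0 : 0 <= y - x by rewrite subr_ge0.
have := ler_wpM2r d_ge0 (ler_wpM2l (ltW eta_gt0) antitone).
lra.
Qed.
End PowerLipschitz.

Section SoftmaxLipschitz.
Variable R : realType.

(* Compare both fractions with F^2 e / (F^2 e + r); its excess over
   e / (e + r) is at most (F - 1) / (F + 1) since (F e - r)^2 >= 0. *)
Lemma ratio_sub_le (e r e' r' F : R) :
  0 < e -> 0 <= r -> 0 < e' -> 0 <= r' -> 1 <= F ->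
  e' <= F * e -> r <= F * r' ->
  e' / (e' + r') - e / (e + r) <= (F - 1) / (F + 1).
Proof.
move=> e_gt0 r_ge0 e'_gt0 r'_ge0 F_ge1 e'_le r_le.
have F_gt0 : 0 < F := lt_le_trans ltr01 F_ge1.
have Fe_gt0 : 0 < F ^+ 2 * e by rewrite mulr_gt0 ?exprn_gt0.
have le_shifted : e' / (e' + r') <= F ^+ 2 * e / (F ^+ 2 * e + r).
  rewrite ler_pdivrMr ?ltr_wpDr // mulrAC ler_pdivlMr ?ltr_wpDr //.
  have : e' * r <= F * e * (F * r').
    by apply: le_trans (ler_wpM2r r_ge0 e'_le) (ler_wpM2l _ r_le); rewrite mulr_ge0 // ltW.
  nra.
have X_gt0 : 0 < (F ^+ 2 * e + r) * (e + r) by rewrite mulr_gt0 ?ltr_wpDr.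
have amgm : e * r * (F + 1) ^+ 2 <= (F ^+ 2 * e + r) * (e + r).
  by have := sqr_ge0 (F * e - r); nra.
have shift_sub : F ^+ 2 * e / (F ^+ 2 * e + r) - e / (e + r)
    = (F - 1) / (F + 1) * (e * r * (F + 1) ^+ 2) / ((F ^+ 2 * e + r) * (e + r)).
  by field; rewrite !gt_eqF ?ltr_wpDr ?ltr_pwDl.
apply: le_trans (lerB le_shifted (lexx _)) _.
rewrite shift_sub ler_pdivrMr // ler_wpM2l // divr_ge0 ?subr_ge0 //.
by rewrite addr_ge0 // ltW.
Qed.

(* The left-hand side is tanh (D / 2). *)
Lemma expR_sub1_div_le (D : R) : 0 <= D -> (expR D - 1) / (expR D + 1) <= D.
Proof.
move=> D_ge0; rewrite ler_pdivrMr ?ltr_wpDr ?expR_gt0 //.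
have := ler_wpM2l (expR_ge0 D) (expR_ge1Dx (- D)).
rewrite expRN mulfV ?gt_eqF ?expR_gt0 //.
nra.
Qed.

Variable V : finType.
Implicit Types s : V -> R.

Lemma softmax_ge0 s v : 0 <= softmax s v.
Proof. by rewrite divr_ge0 ?expR_ge0 ?sumr_ge0 // => w _; apply: expR_ge0. Qed.

Lemma softmax_sub_le s s' (D : R) v :
  (forall w, `|s w - s' w| <= D) -> softmax s' v - softmax s v <= D.
Proof.
move=> s_near; have D_ge0 := le_trans (normr_ge0 _) (s_near v).
have expR_le w : expR (s w) <= expR D * expR (s' w) /\ expR (s' w) <= expR D * expR (s w).
  rewrite -!expRD !ler_expR; have := s_near w; rewrite ler_norml; lra.
rewrite /softmax (bigD1 v) //= [in X in _ - _ / X](bigD1 v) //=.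
apply: le_trans (expR_sub1_div_le D_ge0).
apply: ratio_sub_le; rewrite ?expR_gt0 ?sumr_ge0 //.
- by rewrite -expR0 ler_expR.
- exact: (expR_le v).2.
- by rewrite mulr_sumr; apply: ler_sum => w _; apply: (expR_le w).1.
Qed.

Lemma softmax_lipschitz s s' (D : R) v :
  (forall w, `|s w - s' w| <= D) -> `|softmax s v - softmax s' v| <= D.
Proof.
move=> s_near; rewrite ler_norml lerNl opprB softmax_sub_le //=.
by apply: softmax_sub_le => w; rewrite distrC.
Qed.

End SoftmaxLipschitz.

Section InitialFeatures.
Variables (R : realType) (V : finType) (d dx : nat).

Lemma powR_softmax_lipschitz (T0 eps eta : R) (s s' : V -> R) v :
  0 < T0 -> 0 < eps -> 0 < eta <= 1 ->
  `|(softmax (fun w => s w / T0) v + eps) `^ eta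
    - (softmax (fun w => s' w / T0) v + eps) `^ eta|
  <= eta * eps `^ (eta - 1) / T0 * fmax (fun w => `|s w - s' w|).
Proof.
move=> T0_gt0 eps_gt0 eta01.
have L_ge0 : 0 <= eta * eps `^ (eta - 1).
  by case/andP: eta01 => /ltW eta_ge0 _; rewrite mulr_ge0 ?powR_ge0.
apply: le_trans (powR_lipschitz eps_gt0 _ _ eta01) _; rewrite ?lerDr ?softmax_ge0 //.
rewrite opprD addrACA subrr addr0 -[X in _ <= X]mulrA ler_wpM2l //.
rewrite mulrC; apply: softmax_lipschitz => w.
rewrite -mulrBl normrM [`|T0^-1|]gtr0_norm ?invr_gt0 //.
by rewrite ler_wpM2r ?invr_ge0 ?(ltW T0_gt0) //; apply: (le_fmax (fun w => `|s w - s' w|)).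
Qed.

Lemma fmax_affine_features_sub_le (c delta : R) (a a' : V -> R)
    (u : 'cV[R]_d) (W : 'M[R]_(d, dx)) (x x' : V -> 'cV[R]_dx) :
  0 <= c -> 0 <= delta -> (forall v, `|a v - a' v| <= c * delta) ->
  fmax (fun v => l2norm ((a v *: u + W *m x v) - (a' v *: u + W *m x' v)))
    <= (c * l2norm u + specnorm W) * (delta + fmax (fun v => l2norm (x v - x' v))).
Proof.
move=> c_ge0 delta_ge0 a_near.
set DX := fmax (fun v => l2norm (x v - x' v)); have DX_ge0 : 0 <= DX := fmax_ge0 _.
have W_ge0 := specnorm_ge0 W; have u_ge0 := l2norm_ge0 u.
apply: fmax_le => [|v]; first by rewrite mulr_ge0 ?addr_ge0 ?mulr_ge0.
rewrite opprD addrACA -scalerBl -mulmxBr.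
apply: le_trans (l2normD _ _) _; rewrite l2normZ.
have := ler_wpM2r u_ge0 (a_near v).
have := le_trans (l2norm_mulmx_le W _) (ler_wpM2l W_ge0 (le_fmax _ v : _ <= DX)).
have := mulr_ge0 W_ge0 delta_ge0; have := mulr_ge0 (mulr_ge0 c_ge0 u_ge0) DX_ge0.
nra.
Qed.

End InitialFeatures.

Theorem lemma4p9 (R : realType) (V : finType) (d dx : nat)
  (Sq Sq' : V -> R) (T0 epsp eta : R)
  (hT0 : 0 < T0) (heps : 0 < epsp) (heta0 : 0 < eta) (heta1 : eta <= 1)
  (uq : 'cV[R]_d) (Wx : 'M[R]_(d, dx)) (x x' : V -> 'cV[R]_dx) :
  let p := softmax (fun v => Sq v / T0) in
  let p' := softmax (fun v => Sq' v / T0) in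
  let a := fun v => powR (p v + epsp) eta in
  let a' := fun v => powR (p' v + epsp) eta in
  let h0 := fun v => a v *: uq + Wx *m x v in
  let h0' := fun v => a' v *: uq + Wx *m x' v in
  let Cinit := eta * powR epsp (eta - 1) / T0 * l2norm uq + specnorm Wx in
  let Dseed := fmax (fun v => `|Sq v - Sq' v|) in
  let DX := fmax (fun v => l2norm (x v - x' v)) in
  fmax (fun v => l2norm (h0 v - h0' v)) <= Cinit * (Dseed + DX).
Proof.
apply: fmax_affine_features_sub_le => [||v].
- by rewrite !mulr_ge0 ?invr_ge0 ?powR_ge0 ?(ltW heta0) ?(ltW hT0).
- exact: fmax_ge0.
- by apply: powR_softmax_lipschitz; rewrite ?heta0.
Qed.
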